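(* Let $(\Omega,\mathcal{F})$ be a measurable space, $\mathcal{P}$ a nonempty set of probability measures on it, $\hat{\mathbb{E}}[Z]=\sup_{P\in\mathcal{P}}E_P[Z]$, and let $X,Y$ be random variables with $\hat{\mathbb{E}}[X^2]+\hat{\mathbb{E}}[Y^2]<\infty$. Then (1) $\overline{V}(X+Y)\le\overline{V}(X)+\overline{V}(Y)+2\overline{C}(X,Y)$; (2) $\underline{V}(X+Y)\ge\underline{V}(X)+\underline{V}(Y)+2\underline{C}(X,Y)$; (3) $\underline{V}\left(\frac{X+Y}{2}\right)-\overline{V}\left(\frac{X-Y}{2}\right)\le\underline{C}(X,Y)\le\overline{C}(X,Y)\le\overline{V}\left(\frac{X+Y}{2}\right)-\underline{V}\left(\frac{X-Y}{2}\right)$; (4) $|\overline{C}(X,Y)|\le\sqrt{\overline{V}(X)\overline{V}(Y)}$.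
   Context: For a random variable $W$ with $\hat{\mathbb{E}}[W^2]<\infty$: $\overline{\mu}_W=\hat{\mathbb{E}}[W]$, $\underline{\mu}_W=-\hat{\mathbb{E}}[-W]$, $M_W=[\underline{\mu}_W,\overline{\mu}_W]$. Upper variance $\overline{V}(W)=\min_{\mu\in M_W}\hat{\mathbb{E}}[(W-\mu)^2]$, lower variance $\underline{V}(W)=\min_{\mu\in M_W}\left(-\hat{\mathbb{E}}[-(W-\mu)^2]\right)$. Upper covariance $\overline{C}(X,Y)=\max_{\mu_2\in M_Y}\min_{\mu_1\in M_X}\hat{\mathbb{E}}[(X-\mu_1)(Y-\mu_2)]$; lower covariance $\underline{C}(X,Y)=\min_{\mu_2\in M_Y}\max_{\mu_1\in M_X}\left(-\hat{\mathbb{E}}[-(X-\mu_1)(Y-\mu_2)]\right)$. *)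

From HB Require Import structures.
From mathcomp Require Import all_boot all_order all_algebra.
From mathcomp Require Import all_classical all_reals all_analysis.
Set Implicit Arguments. Unset Strict Implicit. Unset Printing Implicit Defensive.
Import Order.TTheory GRing.Theory Num.Theory.
Local Open Scope classical_set_scope.
Local Open Scope ring_scope.

Section SublinearExpectation.
Context {d : measure_display} {T : measurableType d} {R : realType}.
Variable PP : set (probability T R).

Definition sublin_exp (Z : T -> R) : \bar R :=
  ereal_sup [set (\int[P]_x (Z x)%:E)%E | P in PP].

Definition upper_mean (W : T -> R) : R := fine (sublin_exp W).
Definition lower_mean (W : T -> R) : R := - fine (sublin_exp (fun w => - W w)).

Definition Mset (W : T -> R) : set R :=
  [set mu | lower_mean W <= mu <= upper_mean W].

Definition upper_var (W : T -> R) : R :=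
  fine (ereal_inf [set sublin_exp (fun w => (W w - mu) ^+ 2) | mu in Mset W]).

Definition lower_var (W : T -> R) : R :=
  fine (ereal_inf [set (- sublin_exp (fun w => (- (W w - mu) ^+ 2)%R))%E | mu in Mset W]).

Definition upper_cov (X Y : T -> R) : R :=
  fine (ereal_sup [set ereal_inf
          [set sublin_exp (fun w => (X w - mu1) * (Y w - mu2)) | mu1 in Mset X]
        | mu2 in Mset Y]).

Definition lower_cov (X Y : T -> R) : R :=
  fine (ereal_inf [set ereal_sup
          [set (- sublin_exp (fun w => (- ((X w - mu1) * (Y w - mu2)))%R))%E | mu1 in Mset X]
        | mu2 in Mset Y]).

End SublinearExpectation.

(* Every quantity in the statement only involves sublinear expectations of
   products of two affine functions of (X, Y), so each P in PP may be replaced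
   by its first and second moments and \hat E by a supremum over PP of a
   polynomial in those moments.  For W = s X + t Y, the upper variance is the
   supremum of the variances of the two-point mixtures l P_i + (1 - l) P_j:
   it dominates them because E_P[(W - mu)^2] is affine in P and minimal at the
   mean, and conversely, if all these mixture variances are at most x, the sets
   {mu | E_{P_i}[(W - mu)^2] <= x} are intervals meeting pairwise, hence (in
   dimension one) all together, in a point of M_W.  The same argument with
   half-lines shows that the upper covariance is the supremum of the mixture
   covariances, while the lower variance is the infimum of the variances of
   single measures and the lower covariance lies between the infima of the
   mixture and of the single-measure covariances.  The four inequalities then
   follow from the identities Var(X + Y) = Var X + Var Y + 2 Cov(X, Y) and
   Cov(X, Y) = Var((X + Y) / 2) - Var((X - Y) / 2), and from the
   Cauchy-Schwarz inequality, for a single mixture. *)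

From HB Require Import structures.
From mathcomp Require Import all_boot all_order all_algebra.
From mathcomp Require Import all_classical all_reals all_analysis.
From mathcomp Require Import measurable_realfun.
From mathcomp.algebra_tactics Require Import ring lra.
Import Order.TTheory GRing.Theory Num.Theory.
Local Open Scope classical_set_scope.
Local Open Scope ring_scope.

Section ImageSupInf.
Context {R : realType} {B : Type}.
Implicit Types (D : set B) (g : B -> R).

Definition bounded_on D g := exists K, forall m, D m -> `|g m| <= K.
Definition supI D g := sup [set g m | m in D].
Definition infI D g := inf [set g m | m in D].

Lemma le_supI {D g m} : bounded_on D g -> D m -> g m <= supI D g.
Proof.
move=> [K gK] Dm; apply: ub_le_sup; last by exists m.
by exists K => _ [x Dx <-]; exact: le_trans (ler_norm _) (gK _ Dx).
Qed.

Lemma supI_le {D g x} : D !=set0 -> (forall m, D m -> g m <= x) -> supI D g <= x.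
Proof.
move=> [m Dm] gx; apply: ge_sup; first by exists (g m), m.
by move=> _ [y Dy <-]; exact: gx.
Qed.

Lemma infI_le {D g m} : bounded_on D g -> D m -> infI D g <= g m.
Proof.
move=> [K gK] Dm; apply: ge_inf; last by exists m.
exists (- K) => _ [x Dx <-]; rewrite lerNl.
by apply: le_trans (gK _ Dx); rewrite -normrN ler_norm.
Qed.

Lemma le_infI {D g x} : D !=set0 -> (forall m, D m -> x <= g m) -> x <= infI D g.
Proof.
move=> [m Dm] gx; apply: lb_le_inf; first by exists (g m), m.
by move=> _ [y Dy <-]; exact: gx.
Qed.

Lemma infIE D g : infI D g = - supI D (fun m => - g m).
Proof. by rewrite /infI /inf image_comp. Qed.

Lemma normr_supI_le {D g K} :
  D !=set0 -> (forall m, D m -> `|g m| <= K) -> `|supI D g| <= K.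
Proof.
move=> [m0 Dm0] gK; rewrite ler_norml; apply/andP; split.
  apply: le_trans _ (le_supI (ex_intro _ K gK) Dm0).
  by rewrite lerNl (le_trans (ler_norm _)) // normrN gK.
by apply: supI_le; [exists m0 | move=> m Dm; exact: le_trans (ler_norm _) (gK _ Dm)].
Qed.

Lemma normr_infI_le {D g K} :
  D !=set0 -> (forall m, D m -> `|g m| <= K) -> `|infI D g| <= K.
Proof.
by move=> D0 gK; rewrite infIE normrN; apply: normr_supI_le => // m Dm; rewrite normrN gK.
Qed.

Lemma convex_le_supI {D g i j l} : bounded_on D g -> D i -> D j -> 0 <= l <= 1 ->
  l * g i + (1 - l) * g j <= supI D g.
Proof.
move=> gb Di Dj /andP[l0 l1].
have := ler_wpM2l l0 (le_supI gb Di).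
have := ler_wpM2l (_ : 0 <= 1 - l) (le_supI gb Dj); rewrite subr_ge0 => /(_ l1).
lra.
Qed.

Lemma ereal_sup_EFin_img D g :
  D !=set0 -> bounded_on D g -> ereal_sup [set (g m)%:E | m in D] = (supI D g)%:E.
Proof.
move=> [m Dm] [K gK]; rewrite -[X in ereal_sup X](image_comp g EFin) ereal_sup_EFin //.
  by exists K => _ [x Dx <-]; exact: le_trans (ler_norm _) (gK _ Dx).
by exists (g m), m.
Qed.

Lemma ereal_inf_EFin_img D g :
  D !=set0 -> bounded_on D g -> ereal_inf [set (g m)%:E | m in D] = (infI D g)%:E.
Proof.
move=> [m Dm] [K gK]; rewrite -[X in ereal_inf X](image_comp g EFin) ereal_inf_EFin //.
  exists (- K) => _ [x Dx <-]; rewrite lerNl.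
  by apply: le_trans (gK _ Dx); rewrite -normrN ler_norm.
by exists (g m), m.
Qed.

End ImageSupInf.

Lemma mix_sqr_meet {R : rcfType} (vi vj ai aj x : R) :
  (forall l, 0 <= l <= 1 -> l * vi + (1 - l) * vj + l * (1 - l) * (ai - aj) ^+ 2 <= x) ->
  ai - Num.sqrt (x - vi) <= aj + Num.sqrt (x - vj).
Proof.
move=> H.
have vix : vi <= x.
  by have := H 1; rewrite ler01 lexx subrr !(mulr0, mul0r) mul1r !addr0 => /(_ isT).
have vjx : vj <= x.
  by have := H 0; rewrite lexx ler01 subr0 !mul0r mul1r add0r addr0 => /(_ isT).
set ri := Num.sqrt (x - vi); set rj := Num.sqrt (x - vj).
have ri0 : 0 <= ri := sqrtr_ge0 _.
have rj0 : 0 <= rj := sqrtr_ge0 _.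
have ri2 : ri ^+ 2 = x - vi by rewrite sqr_sqrtr // subr_ge0.
have rj2 : rj ^+ 2 = x - vj by rewrite sqr_sqrtr // subr_ge0.
rewrite leNgt; apply/negP => gap.
set D := ai - aj.
have hD : ri + rj < D by rewrite /D; lra.
have D0 : 0 < D by lra.
(* at this weight the mixture inequality fails as soon as the two intervals are disjoint *)
set l := (D + rj - ri) / (2 * D).
have l01 : 0 <= l <= 1.
  apply/andP; split; first by rewrite /l divr_ge0 //; lra.
  by rewrite /l ler_pdivrMr ?mul1r; lra.
have e : (l * (1 - l) * D ^+ 2 - l * ri ^+ 2 - (1 - l) * rj ^+ 2) * (4 * D)
   = (D - (ri + rj)) * ((D - (ri + rj)) * (D + 2 * (ri + rj)) + 8 * ri * rj).
  by rewrite /l; field; rewrite gt_eqF.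
have : 0 < (D - (ri + rj)) * ((D - (ri + rj)) * (D + 2 * (ri + rj)) + 8 * ri * rj).
  apply: mulr_gt0; first lra.
  have : 0 < (D - (ri + rj)) * (D + 2 * (ri + rj)) by apply: mulr_gt0; lra.
  have : 0 <= ri * rj by exact: mulr_ge0.
  lra.
rewrite -e pmulr_lgt0; last lra.
have := H l l01; rewrite ri2 rj2 -/D; lra.
Qed.

Lemma mix_halfline_meet {R : realFieldType} (ci cj ai aj qi qj x : R) :
  0 < qi -> qj < 0 ->
  (forall l, 0 <= l <= 1 ->
     l * ci + (1 - l) * cj + l * (1 - l) * (ai - aj) * (qi - qj) <= x) ->
  ai - (x - ci) / qi <= aj - (x - cj) / qj.
Proof.
move=> qi0 qj0 H.
(* the weight for which [l * qi + (1 - l) * qj = 0] *)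
set l := - qj / (qi - qj).
have l01 : 0 <= l <= 1.
  apply/andP; split; first by rewrite /l divr_ge0 //; lra.
  by rewrite /l ler_pdivrMr ?mul1r; lra.
have e : (l * ci + (1 - l) * cj + l * (1 - l) * (ai - aj) * (qi - qj)) * (qi - qj)
   = - qj * ci + qi * cj - qj * qi * (ai - aj).
  by rewrite /l; field; rewrite gt_eqF ?subr_gt0 // (lt_trans qj0).
have h : - qj * ci + qi * cj - qj * qi * (ai - aj) <= x * (qi - qj).
  by rewrite -e ler_wpM2r ?H //; lra.
rewrite -(ler_pM2r (_ : 0 < qi * - qj)); last by apply: mulr_gt0; lra.
have -> : (ai - (x - ci) / qi) * (qi * - qj) = - qj * (ai * qi - x + ci).
  by field; rewrite gt_eqF.
have -> : (aj - (x - cj) / qj) * (qi * - qj) = qi * (- qj * aj + x - cj).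
  by field; rewrite lt_eqF.
lra.
Qed.

Section OneDimensionalHelly.
Context {R : realType}.

Lemma separating_point (L U : set R) :
  L !=set0 -> U !=set0 -> (forall l u, L l -> U u -> l <= u) ->
  exists t, ubound L t /\ lbound U t.
Proof.
move=> L0 [u0 Uu0] LU.
have Lub : has_ubound L by exists u0 => l Ll; exact: LU.
exists (sup L); split; first exact: ub_le_sup.
by move=> u Uu; apply: ge_sup => // l Ll; exact: LU.
Qed.

Context {A : Type} {I : set A}.
Hypothesis I0 : I !=set0.

Lemma helly_sqr (a v : A -> R) (lo hi x : R) :
  (forall i, I i -> lo <= a i <= hi) ->
  (forall i j l, I i -> I j -> 0 <= l <= 1 ->
     l * v i + (1 - l) * v j + l * (1 - l) * (a i - a j) ^+ 2 <= x) ->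
  exists2 mu, lo <= mu <= hi & forall i, I i -> v i + (a i - mu) ^+ 2 <= x.
Proof.
move=> aI H.
pose r i := Num.sqrt (x - v i).
have r0 i : 0 <= r i := sqrtr_ge0 _.
have meet i j : I i -> I j -> a i - r i <= a j + r j.
  by move=> Ii Ij; apply: mix_sqr_meet => l; exact: H.
have [i0 Ii0] := I0.
pose L := [set lo] `|` [set a i - r i | i in I].
pose U := [set hi] `|` [set a j + r j | j in I].
have [t [tL tU]] : exists t, ubound L t /\ lbound U t.
  apply: separating_point; [by exists lo; left | by exists hi; left |].
  move=> _ _ [->|[i Ii <-]] [->|[j Ij <-]].
  + by have := aI _ Ii0; lra.
  + by have := aI _ Ij; have := r0 j; lra.
  + by have := aI _ Ii; have := r0 i; lra.
  + exact: meet.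
exists t; first by rewrite (tL lo) ?(tU hi) //; [left | left].
move=> i Ii.
have vix : v i <= x by have := H i i 1 Ii Ii; rewrite ler01 lexx => /(_ isT); lra.
have r2 : r i ^+ 2 = x - v i by rewrite sqr_sqrtr // subr_ge0.
have := tL (a i - r i) (or_intror (ex_intro2 _ _ i Ii erefl)).
have := tU (a i + r i) (or_intror (ex_intro2 _ _ i Ii erefl)).
have := r0 i; nra.
Qed.

Lemma helly_cross (a b c : A -> R) (m lo hi x : R) :
  (forall i, I i -> lo <= a i <= hi) ->
  (forall i j l, I i -> I j -> 0 <= l <= 1 ->
     l * c i + (1 - l) * c j + l * (1 - l) * (a i - a j) * (b i - b j) <= x) ->
  exists2 t, lo <= t <= hi & forall i, I i -> c i + (a i - t) * (b i - m) <= x.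
Proof.
move=> aI H.
have cx i : I i -> c i <= x.
  by move=> Ii; have := H i i 1 Ii Ii; rewrite ler01 lexx => /(_ isT); lra.
pose q i := b i - m.
pose e i := a i - (x - c i) / q i.
have qK i : q i != 0 -> (x - c i) / q i * q i = x - c i by move=> qi; rewrite divfK.
have [i0 Ii0] := I0.
pose L := [set lo] `|` [set e i | i in [set i | I i /\ 0 < q i]].
pose U := [set hi] `|` [set e j | j in [set j | I j /\ q j < 0]].
have [t [tL tU]] : exists t, ubound L t /\ lbound U t.
  apply: separating_point; [by exists lo; left | by exists hi; left |].
  move=> _ _ [->|[i [Ii qi] <-]] [->|[j [Ij qj] <-]].
  + by have := aI _ Ii0; lra.
  + have := qK j (ltr0_neq0 qj); have := cx j Ij; have := aI j Ij; rewrite /e; nra.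
  + have := qK i (lt0r_neq0 qi); have := cx i Ii; have := aI i Ii; rewrite /e; nra.
  + apply: mix_halfline_meet => // l l01.
    have -> : q i - q j = b i - b j by rewrite /q; ring.
    exact: H.
exists t; first by rewrite (tL lo) ?(tU hi) //; [left | left].
move=> i Ii; rewrite -/(q i).
have [qn|qp|->] := ltgtP (q i) 0; last by rewrite mulr0 addr0 cx.
- have := tU (e i) (or_intror (ex_intro2 _ _ i (conj Ii qn) erefl)).
  by have := qK i (ltr0_neq0 qn); rewrite /e; nra.
- have := tL (e i) (or_intror (ex_intro2 _ _ i (conj Ii qp) erefl)).
  by have := qK i (lt0r_neq0 qp); rewrite /e; nra.
Qed.

End OneDimensionalHelly.

Lemma sqr_le_mul_of_quad_ge0 {R : realFieldType} (a b c : R) :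
  (forall s t, 0 <= s ^+ 2 * a + 2 * s * t * c + t ^+ 2 * b) -> c ^+ 2 <= a * b.
Proof.
move=> H.
have := H 1 0; have := H 0 1; have := H 1 1; have := H 1 (-1).
have := H b (- c); have := H c (- a).
have [a0|a0] := ltrP 0 a; first by nra.
have [b0|b0] := ltrP 0 b; first by nra.
move=> *; have -> : c = 0 by lra.
by rewrite expr0n /=; nra.
Qed.

Section MomentFamily.
Context {R : realType} {A : Type} {mx my mxx myy mxy : A -> R}.

(* [Eprod i a b c a' b' c'] is the expectation of [(a X + b Y + c) (a' X + b' Y + c')]
   computed from the moments of [i]. *)
Definition Eprod (i : A) (a b c a' b' c' : R) : R :=
  a * a' * mxx i + (a * b' + a' * b) * mxy i + b * b' * myy i
  + (a * c' + a' * c) * mx i + (b * c' + b' * c) * my i + c * c'.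

Record moment_family (I : set A) : Prop := MomentFamily {
  moment_family_neq0 : I !=set0;
  Eprod_sqr_ge0 : forall i a b c, I i -> 0 <= Eprod i a b c a b c;
  sqr_moments_ubounded : exists K, forall i, I i -> mxx i <= K /\ myy i <= K }.
Arguments moment_family_neq0 {I}.
Arguments Eprod_sqr_ge0 {I}.
Arguments sqr_moments_ubounded {I}.

Definition mean s t i := Eprod i s t 0 0 0 1.
Definition sqdev s t mu i := Eprod i s t (- mu) s t (- mu).
Definition var s t i := sqdev s t (mean s t i) i.
Definition cross m1 m2 i := Eprod i 1 0 (- m1) 0 1 (- m2).
Definition cov i := cross (mean 1 0 i) (mean 0 1 i) i.

(* Variance and covariance of the mixture [l P_i + (1 - l) P_j]. *)
Definition mix_var s t i j l :=
  l * var s t i + (1 - l) * var s t j + l * (1 - l) * (mean s t i - mean s t j) ^+ 2.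
Definition mix_cov i j l :=
  l * cov i + (1 - l) * cov j
  + l * (1 - l) * (mean 1 0 i - mean 1 0 j) * (mean 0 1 i - mean 0 1 j).

Lemma sqdevE s t mu i : sqdev s t mu i = var s t i + (mean s t i - mu) ^+ 2.
Proof. by rewrite /var /sqdev /mean /Eprod; ring. Qed.

Lemma crossE m1 m2 i : cross m1 m2 i = cov i + (mean 1 0 i - m1) * (mean 0 1 i - m2).
Proof. by rewrite /cov /cross /mean /Eprod; ring. Qed.

Lemma mix_sqdevE s t mu i j l :
  l * sqdev s t mu i + (1 - l) * sqdev s t mu j
  = mix_var s t i j l + (l * mean s t i + (1 - l) * mean s t j - mu) ^+ 2.
Proof. by rewrite /mix_var !sqdevE; ring. Qed.

Lemma mix_crossE m1 i j l :
  let m2 := l * mean 0 1 i + (1 - l) * mean 0 1 j in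
  l * cross m1 m2 i + (1 - l) * cross m1 m2 j = mix_cov i j l.
Proof. by rewrite /mix_cov !crossE; ring. Qed.

Lemma var_add i : var 1 1 i = var 1 0 i + var 0 1 i + 2 * cov i.
Proof. by rewrite /var /cov /sqdev /cross /mean /Eprod; ring. Qed.

Lemma mix_var_expand s t i j l : mix_var s t i j l
  = s ^+ 2 * mix_var 1 0 i j l + 2 * s * t * mix_cov i j l + t ^+ 2 * mix_var 0 1 i j l.
Proof. by rewrite /mix_var /mix_cov /var /cov /sqdev /cross /mean /Eprod; ring. Qed.

Lemma mix_var_add i j l :
  mix_var 1 1 i j l = mix_var 1 0 i j l + mix_var 0 1 i j l + 2 * mix_cov i j l.
Proof. by rewrite mix_var_expand; ring. Qed.

Lemma mix_cov_polar i j l :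
  mix_cov i j l = mix_var (2^-1) (2^-1) i j l - mix_var (2^-1) (- 2^-1) i j l.
Proof. by rewrite !(mix_var_expand (2^-1)); field. Qed.

Context {I : set A}.
Hypothesis HI : moment_family I.

Let I0 : I !=set0 := moment_family_neq0 HI.

(* The counterparts of [Mset], [upper_var], [lower_var], [upper_cov] and
   [lower_cov] for [W = s X + t Y], with [sup]/[inf] over [I] in place of the
   sublinear expectation. *)
Definition mean_int s t := [set mu | infI I (mean s t) <= mu <= supI I (mean s t)].
Definition var_up s t := infI (mean_int s t) (fun mu => supI I (sqdev s t mu)).
Definition var_lo s t := infI (mean_int s t) (fun mu => infI I (sqdev s t mu)).
Definition cov_up :=
  supI (mean_int 0 1) (fun m2 => infI (mean_int 1 0) (fun m1 => supI I (cross m1 m2))).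
Definition cov_lo :=
  infI (mean_int 0 1) (fun m2 => supI (mean_int 1 0) (fun m1 => infI I (cross m1 m2))).

Lemma moments_bounded : exists B, forall i, I i ->
  [/\ `|mx i| <= B, `|my i| <= B, `|mxx i| <= B, `|myy i| <= B & `|mxy i| <= B].
Proof.
have [K HK] := sqr_moments_ubounded HI.
exists (K + 1) => i Ii; have [xxK yyK] := HK i Ii.
have E := Eprod_sqr_ge0 HI.
have := E i 1 0 0 Ii; have := E i 0 1 0 Ii; have := E i 1 0 1 Ii; have := E i 1 0 (-1) Ii.
have := E i 0 1 1 Ii; have := E i 0 1 (-1) Ii; have := E i 1 1 0 Ii; have := E i 1 (-1) 0 Ii.
rewrite /Eprod => *; rewrite !ler_norml; split; apply/andP; split; lra.
Qed.

Lemma Eprod_bounded K : exists L, forall i a b c a' b' c', I i ->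
  `|a| <= K -> `|b| <= K -> `|c| <= K -> `|a'| <= K -> `|b'| <= K -> `|c'| <= K ->
  `|Eprod i a b c a' b' c'| <= L.
Proof.
have [B HB] := moments_bounded.
exists (8 * (K * K * B) + K * K) => i a b c a' b' c' Ii ha hb hc ha' hb' hc'.
have [hx hy hxx hyy hxy] := HB i Ii.
have K0 : 0 <= K by exact: le_trans (normr_ge0 a) ha.
have term u v w : `|u| <= K -> `|v| <= K -> `|w| <= B -> - (K * K * B) <= u * v * w <= K * K * B.
  move=> hu hv hw; rewrite -ler_norml !normrM.
  by apply: ler_pM; rewrite ?mulr_ge0 ?ler_pM.
have := term _ _ _ ha ha' hxx; have := term _ _ _ ha hb' hxy.
have := term _ _ _ ha' hb hxy; have := term _ _ _ hb hb' hyy.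
have := term _ _ _ ha hc' hx; have := term _ _ _ ha' hc hx.
have := term _ _ _ hb hc' hy; have := term _ _ _ hb' hc hy.
have : `|c * c'| <= K * K by rewrite normrM; exact: ler_pM.
rewrite ler_norml /Eprod => *; rewrite ler_norml; apply/andP; split; lra.
Qed.

Lemma Eprod_bounded_on a b c a' b' c' : bounded_on I (fun i => Eprod i a b c a' b' c').
Proof.
have [L HL] := Eprod_bounded (`|a| + `|b| + `|c| + `|a'| + `|b'| + `|c'|).
exists L => i Ii.
have := normr_ge0 a; have := normr_ge0 b; have := normr_ge0 c.
have := normr_ge0 a'; have := normr_ge0 b'; have := normr_ge0 c'.
by move=> *; apply: HL => //; lra.
Qed.

Lemma sqdev_ge0 s t mu {i} : I i -> 0 <= sqdev s t mu i.
Proof. exact: Eprod_sqr_ge0. Qed.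

Lemma mix_var_ge0 s t {i j l} : I i -> I j -> 0 <= l <= 1 -> 0 <= mix_var s t i j l.
Proof.
move=> Ii Ij /andP[l0 l1]; rewrite /mix_var.
have := sqdev_ge0 s t (mean s t i) Ii; have := sqdev_ge0 s t (mean s t j) Ij.
have := sqr_ge0 (mean s t i - mean s t j); rewrite /var => *.
have : 0 <= l * (1 - l) by apply: mulr_ge0; lra.
nra.
Qed.

Lemma mean_in_mean_int s t {i} : I i -> mean_int s t (mean s t i).
Proof.
have mb : bounded_on I (mean s t) := Eprod_bounded_on _ _ _ _ _ _.
by move=> Ii; apply/andP; split; [exact: infI_le mb Ii | exact: le_supI mb Ii].
Qed.

Lemma mean_int_neq0 s t : mean_int s t !=set0.
Proof. by have [i Ii] := I0; exists (mean s t i); exact: mean_in_mean_int. Qed.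

Lemma mean_int_conv s t m1 m2 l : mean_int s t m1 -> mean_int s t m2 -> 0 <= l <= 1 ->
  mean_int s t (l * m1 + (1 - l) * m2).
Proof. by move=> /andP[? ?] /andP[? ?] /andP[? ?]; apply/andP; split; nra. Qed.

Lemma mean_int_bounded s t : exists K, forall mu, mean_int s t mu -> `|mu| <= K.
Proof.
have [K HK] : bounded_on I (mean s t) := Eprod_bounded_on _ _ _ _ _ _.
exists K => mu /andP[lo hi].
have := normr_infI_le I0 HK; have := normr_supI_le I0 HK.
by rewrite !ler_norml => /andP[? ?] /andP[? ?]; apply/andP; split; lra.
Qed.

Lemma sqdev_bounded s t :
  exists L, forall mu i, mean_int s t mu -> I i -> `|sqdev s t mu i| <= L.
Proof.
have [K HK] := mean_int_bounded s t.
have [L HL] := Eprod_bounded (`|s| + `|t| + K).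
exists L => mu i Mmu Ii; have := HK _ Mmu; have := le_trans (normr_ge0 _) (HK _ Mmu).
have := normr_ge0 s; have := normr_ge0 t.
by move=> *; apply: HL; rewrite ?normrN //; lra.
Qed.

Lemma cross_bounded : exists L, forall m1 m2 i,
  mean_int 1 0 m1 -> mean_int 0 1 m2 -> I i -> `|cross m1 m2 i| <= L.
Proof.
have [K1 HK1] := mean_int_bounded 1 0; have [K2 HK2] := mean_int_bounded 0 1.
have [L HL] := Eprod_bounded (1 + K1 + K2).
exists L => m1 m2 i M1 M2 Ii; have := HK1 _ M1; have := HK2 _ M2.
have := le_trans (normr_ge0 _) (HK1 _ M1); have := le_trans (normr_ge0 _) (HK2 _ M2).
by move=> *; apply: HL; rewrite ?normrN ?normr0 ?normr1 //; lra.
Qed.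

Lemma sup_sqdev_bounded_on s t : bounded_on (mean_int s t) (fun mu => supI I (sqdev s t mu)).
Proof.
have [L HL] := sqdev_bounded s t.
by exists L => mu Mmu; apply: normr_supI_le I0 _ => i Ii; exact: HL.
Qed.

Lemma inf_sqdev_bounded_on s t : bounded_on (mean_int s t) (fun mu => infI I (sqdev s t mu)).
Proof.
have [L HL] := sqdev_bounded s t.
by exists L => mu Mmu; apply: normr_infI_le I0 _ => i Ii; exact: HL.
Qed.

Lemma sup_cross_bounded_on {m2} : mean_int 0 1 m2 ->
  bounded_on (mean_int 1 0) (fun m1 => supI I (cross m1 m2)).
Proof.
have [L HL] := cross_bounded.
by move=> M2; exists L => m1 M1; apply: normr_supI_le I0 _ => i Ii; exact: HL.
Qed.

Lemma inf_cross_bounded_on {m2} : mean_int 0 1 m2 ->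
  bounded_on (mean_int 1 0) (fun m1 => infI I (cross m1 m2)).
Proof.
have [L HL] := cross_bounded.
by move=> M2; exists L => m1 M1; apply: normr_infI_le I0 _ => i Ii; exact: HL.
Qed.

Lemma cov_up_bounded_on :
  bounded_on (mean_int 0 1) (fun m2 => infI (mean_int 1 0) (fun m1 => supI I (cross m1 m2))).
Proof.
have [L HL] := cross_bounded.
exists L => m2 M2; apply: normr_infI_le (mean_int_neq0 1 0) _ => m1 M1.
by apply: normr_supI_le I0 _ => i Ii; exact: HL.
Qed.

Lemma cov_lo_bounded_on :
  bounded_on (mean_int 0 1) (fun m2 => supI (mean_int 1 0) (fun m1 => infI I (cross m1 m2))).
Proof.
have [L HL] := cross_bounded.
exists L => m2 M2; apply: normr_supI_le (mean_int_neq0 1 0) _ => m1 M1.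
by apply: normr_infI_le I0 _ => i Ii; exact: HL.
Qed.

Lemma mix_var_le_var_up s t {i j l} : I i -> I j -> 0 <= l <= 1 ->
  mix_var s t i j l <= var_up s t.
Proof.
move=> Ii Ij l01; apply: le_infI (mean_int_neq0 s t) _ => mu _.
have sb : bounded_on I (sqdev s t mu) := Eprod_bounded_on _ _ _ _ _ _.
have := convex_le_supI sb Ii Ij l01; rewrite mix_sqdevE.
by have := sqr_ge0 (l * mean s t i + (1 - l) * mean s t j - mu); lra.
Qed.

Lemma var_lo_le_var s t {i} : I i -> var_lo s t <= var s t i.
Proof.
move=> Ii; apply: le_trans (infI_le (inf_sqdev_bounded_on s t) (mean_in_mean_int s t Ii)) _.
have sb : bounded_on I (sqdev s t (mean s t i)) := Eprod_bounded_on _ _ _ _ _ _.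
exact: infI_le sb Ii.
Qed.

Lemma mix_cov_le_cov_up {i j l} : I i -> I j -> 0 <= l <= 1 -> mix_cov i j l <= cov_up.
Proof.
move=> Ii Ij l01; set m2 := l * mean 0 1 i + (1 - l) * mean 0 1 j.
have M2 : mean_int 0 1 m2 by apply: mean_int_conv => //; exact: mean_in_mean_int.
apply: le_trans (le_supI cov_up_bounded_on M2).
apply: le_infI (mean_int_neq0 1 0) _ => m1 _.
have cb : bounded_on I (cross m1 m2) := Eprod_bounded_on _ _ _ _ _ _.
by rewrite -(mix_crossE m1 i j l); exact: convex_le_supI cb Ii Ij l01.
Qed.

Lemma cov_lo_le_cov {i} : I i -> cov_lo <= cov i.
Proof.
move=> Ii; have M2 := mean_in_mean_int 0 1 Ii.
apply: le_trans (infI_le cov_lo_bounded_on M2) _.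
apply: supI_le (mean_int_neq0 1 0) _ => m1 _.
have cb : bounded_on I (cross m1 (mean 0 1 i)) := Eprod_bounded_on _ _ _ _ _ _.
by apply: le_trans (infI_le cb Ii) _; rewrite crossE subrr mulr0 addr0.
Qed.

Lemma var_up_le s t x :
  (forall i j l, I i -> I j -> 0 <= l <= 1 -> mix_var s t i j l <= x) -> var_up s t <= x.
Proof.
move=> H; have [mu Mmu Hmu] := helly_sqr I0 (mean s t) (var s t) _ _ x
  (fun i Ii => mean_in_mean_int s t Ii) H.
apply: le_trans (infI_le (sup_sqdev_bounded_on s t) Mmu) _.
by apply: supI_le I0 _ => i Ii; rewrite sqdevE; exact: Hmu.
Qed.

Lemma le_var_lo s t x : (forall i, I i -> x <= var s t i) -> x <= var_lo s t.
Proof.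
move=> H; apply: le_infI (mean_int_neq0 s t) _ => mu _.
apply: le_infI I0 _ => i Ii; rewrite sqdevE.
by have := H i Ii; have := sqr_ge0 (mean s t i - mu); lra.
Qed.

Lemma cov_up_le x :
  (forall i j l, I i -> I j -> 0 <= l <= 1 -> mix_cov i j l <= x) -> cov_up <= x.
Proof.
move=> H; apply: supI_le (mean_int_neq0 0 1) _ => m2 M2.
have [t Mt Ht] := helly_cross I0 (mean 1 0) (mean 0 1) cov m2 _ _ x
  (fun i Ii => mean_in_mean_int 1 0 Ii) H.

apply: le_trans (infI_le (sup_cross_bounded_on M2) Mt) _.
by apply: supI_le I0 _ => i Ii; rewrite crossE; exact: Ht.
Qed.

Lemma le_cov_lo x :
  (forall i j l, I i -> I j -> 0 <= l <= 1 -> x <= mix_cov i j l) -> x <= cov_lo.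
Proof.
move=> H; apply: le_infI (mean_int_neq0 0 1) _ => m2 M2.
have H' i j l : I i -> I j -> 0 <= l <= 1 ->
    l * - cov i + (1 - l) * - cov j
    + l * (1 - l) * (mean 1 0 i - mean 1 0 j) * (- mean 0 1 i - - mean 0 1 j) <= - x.
  by move=> Ii Ij hl; have := H i j l Ii Ij hl; rewrite /mix_cov; lra.
have [t Mt Ht] := helly_cross I0 (mean 1 0) (fun i => - mean 0 1 i) (fun i => - cov i)
  (- m2) _ _ (- x) (fun i Ii => mean_in_mean_int 1 0 Ii) H'.
apply: le_trans _ (le_supI (inf_cross_bounded_on M2) Mt).
by apply: le_infI I0 _ => i Ii; rewrite crossE; have := Ht i Ii; lra.
Qed.

Lemma var_lo_le_mix_var s t {i j l} : I i -> I j -> 0 <= l <= 1 ->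
  var_lo s t <= mix_var s t i j l.
Proof.
move=> Ii Ij /andP[l0 l1]; rewrite /mix_var.
have := ler_wpM2l l0 (var_lo_le_var s t Ii).
have := ler_wpM2l (_ : 0 <= 1 - l) (var_lo_le_var s t Ij); rewrite subr_ge0 => /(_ l1).
have : 0 <= l * (1 - l) * (mean s t i - mean s t j) ^+ 2.
  by rewrite mulr_ge0 ?sqr_ge0 // mulr_ge0 // subr_ge0.
lra.
Qed.

Lemma var_up_add_le : var_up 1 1 <= var_up 1 0 + var_up 0 1 + 2 * cov_up.
Proof.
apply: var_up_le => i j l Ii Ij hl; rewrite mix_var_add.
have := mix_var_le_var_up 1 0 Ii Ij hl; have := mix_var_le_var_up 0 1 Ii Ij hl.
by have := mix_cov_le_cov_up Ii Ij hl; lra.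
Qed.

Lemma var_lo_add_ge : var_lo 1 0 + var_lo 0 1 + 2 * cov_lo <= var_lo 1 1.
Proof.
apply: le_var_lo => i Ii; rewrite var_add.
have := var_lo_le_var 1 0 Ii; have := var_lo_le_var 0 1 Ii.
by have := cov_lo_le_cov Ii; lra.
Qed.

Lemma var_diff_le_cov_lo : var_lo (2^-1) (2^-1) - var_up (2^-1) (- 2^-1) <= cov_lo.
Proof.
apply: le_cov_lo => i j l Ii Ij hl; rewrite mix_cov_polar.
have := var_lo_le_mix_var (2^-1) (2^-1) Ii Ij hl.
by have := mix_var_le_var_up (2^-1) (- 2^-1) Ii Ij hl; lra.
Qed.

Lemma cov_up_le_var_diff : cov_up <= var_up (2^-1) (2^-1) - var_lo (2^-1) (- 2^-1).
Proof.
apply: cov_up_le => i j l Ii Ij hl; rewrite mix_cov_polar.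
have := var_lo_le_mix_var (2^-1) (- 2^-1) Ii Ij hl.
by have := mix_var_le_var_up (2^-1) (2^-1) Ii Ij hl; lra.
Qed.

Lemma mix_cov_diag i : mix_cov i i 1 = cov i.
Proof. by rewrite /mix_cov; ring. Qed.

Lemma cov_lo_le_cov_up : cov_lo <= cov_up.
Proof.
have [i Ii] := I0; have l1 : 0 <= (1 : R) <= 1 by rewrite ler01 lexx.
by apply: le_trans (cov_lo_le_cov Ii) _; rewrite -mix_cov_diag; exact: mix_cov_le_cov_up.
Qed.

Lemma normr_cov_up_le : `|cov_up| <= Num.sqrt (var_up 1 0 * var_up 0 1).
Proof.
have cs i j l : I i -> I j -> 0 <= l <= 1 ->
    `|mix_cov i j l| <= Num.sqrt (var_up 1 0 * var_up 0 1).
  move=> Ii Ij hl.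
  have : mix_cov i j l ^+ 2 <= mix_var 1 0 i j l * mix_var 0 1 i j l.
    by apply: sqr_le_mul_of_quad_ge0 => s t; rewrite -mix_var_expand; exact: mix_var_ge0.
  move/ler_wsqrtr; rewrite sqrtr_sqr => /le_trans; apply; apply: ler_wsqrtr.
  by apply: ler_pM; rewrite ?(mix_var_ge0 _ _ Ii Ij hl) ?(mix_var_le_var_up _ _ Ii Ij hl).
rewrite ler_norml; apply/andP; split; last first.
  by apply: cov_up_le => i j l Ii Ij hl; exact: le_trans (ler_norm _) (cs i j l Ii Ij hl).
have [i Ii] := I0; have l1 : 0 <= (1 : R) <= 1 by rewrite ler01 lexx.
apply: le_trans (mix_cov_le_cov_up Ii Ii l1); rewrite lerNl.
by apply: le_trans (cs i i 1 Ii Ii l1); rewrite -normrN ler_norm.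
Qed.

End MomentFamily.

Lemma integrableDZ_Rintegral {d} {T : measurableType d} {R : realType} {mu : measure T R}
    {f g : T -> R} k :
  mu.-integrable setT (EFin \o f) -> mu.-integrable setT (EFin \o g) ->
  mu.-integrable setT (EFin \o (fun x => f x + k * g x)) /\
  \int[mu]_x (f x + k * g x) = \int[mu]_x f x + k * \int[mu]_x g x.
Proof.
move=> fi gi.
have kgi : mu.-integrable setT (EFin \o (fun x => k * g x)).
  by apply: eq_integrable measurableT _ _ _ (integrableZl measurableT k gi).
split; last by rewrite RintegralD // RintegralZl.
by apply: eq_integrable measurableT _ _ _ (integrableD measurableT fi kgi).
Qed.

Section SublinearMoments.
Context {d : measure_display} {T : measurableType d} {R : realType}.
Context {PP : set (probability T R)} {X Y : T -> R}.
Hypotheses (PP0 : PP !=set0) (mX : measurable_fun setT X) (mY : measurable_fun setT Y).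
Hypothesis fin2 :
  (sublin_exp PP (fun w => (X w ^+ 2)%R) + sublin_exp PP (fun w => (Y w ^+ 2)%R) < +oo)%E.

Let mx (P : probability T R) := \int[P]_x X x.
Let my (P : probability T R) := \int[P]_x Y x.
Let mxx (P : probability T R) := \int[P]_x X x ^+ 2.
Let myy (P : probability T R) := \int[P]_x Y x ^+ 2.
Let mxy (P : probability T R) := \int[P]_x (X x * Y x).

Local Notation E := (@Eprod R _ mx my mxx myy mxy).
Local Notation sqdev := (@sqdev R _ mx my mxx myy mxy).
Local Notation cross := (@cross R _ mx my mxx myy mxy).
Local Notation mean_int := (@mean_int R _ mx my mxx myy mxy PP).
Local Notation var_up := (@var_up R _ mx my mxx myy mxy PP).
Local Notation var_lo := (@var_lo R _ mx my mxx myy mxy PP).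
Local Notation cov_up := (@cov_up R _ mx my mxx myy mxy PP).
Local Notation cov_lo := (@cov_lo R _ mx my mxx myy mxy PP).

Lemma sublin_exp_ge f {P} : PP P -> (\int[P]_x (f x)%:E <= sublin_exp PP f)%E.
Proof. by move=> PPP; apply: ereal_sup_ubound; exists P. Qed.

Lemma sublin_exp_sqr_ge0 (Z : T -> R) : (0 <= sublin_exp PP (fun w => (Z w ^+ 2)%R))%E.
Proof.
have [P PPP] := PP0; apply: le_trans _ (sublin_exp_ge _ PPP).
by apply: integral_ge0 => x _; rewrite lee_fin sqr_ge0.
Qed.

Lemma sublin_exp_sqr_integrable (Z : T -> R) {P} : measurable_fun setT Z -> PP P ->
  (sublin_exp PP (fun w => (Z w ^+ 2)%R) < +oo)%E ->
  P.-integrable setT (EFin \o (fun x => Z x ^+ 2)).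
Proof.
move=> mZ PPP Zfin; apply/integrableP; split.
  by apply/measurable_EFinP; exact: measurable_funX.
apply: le_lt_trans Zfin; apply: le_trans _ (sublin_exp_ge _ PPP).
rewrite le_eqVlt; apply/orP; left; apply/eqP.
by apply: eq_integral => x _ /=; rewrite ger0_norm // sqr_ge0.
Qed.

Section OneMeasure.
Variable P : probability T R.
Hypothesis PPP : PP P.

Lemma integrable_X2 : P.-integrable setT (EFin \o (fun x => X x ^+ 2)).
Proof.
apply: sublin_exp_sqr_integrable => //; apply: le_lt_trans fin2.
by rewrite leeDl // sublin_exp_sqr_ge0.
Qed.

Lemma integrable_Y2 : P.-integrable setT (EFin \o (fun x => Y x ^+ 2)).
Proof.
apply: sublin_exp_sqr_integrable => //; apply: le_lt_trans fin2.
by rewrite leeDr // sublin_exp_sqr_ge0.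
Qed.

Let icst k : P.-integrable setT (EFin \o cst k).
Proof. exact: finite_measure_integrable_cst. Qed.

Let iX : P.-integrable setT (EFin \o X).
Proof.
have [i _] := integrableDZ_Rintegral 1 (icst 1) integrable_X2.
apply: le_integrable i => //; first exact/measurable_EFinP.
move=> x _ /=; rewrite lee_fin mul1r [leRHS]ger0_norm ?addr_ge0 ?sqr_ge0 //.
have := real_normK (num_real (X x)); have := sqr_ge0 (`|X x| - 1).
have := sqr_ge0 (X x); have := normr_ge0 (X x); nra.
Qed.

Let iY : P.-integrable setT (EFin \o Y).
Proof.
have [i _] := integrableDZ_Rintegral 1 (icst 1) integrable_Y2.
apply: le_integrable i => //; first exact/measurable_EFinP.
move=> x _ /=; rewrite lee_fin mul1r [leRHS]ger0_norm ?addr_ge0 ?sqr_ge0 //.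
have := real_normK (num_real (Y x)); have := sqr_ge0 (`|Y x| - 1).
have := sqr_ge0 (Y x); have := normr_ge0 (Y x); nra.
Qed.

Let iXY : P.-integrable setT (EFin \o (fun x => X x * Y x)).
Proof.
have [i _] := integrableDZ_Rintegral 1 integrable_X2 integrable_Y2.
apply: le_integrable i => //; first by apply/measurable_EFinP; exact: measurable_funM.
move=> x _ /=; rewrite lee_fin mul1r [leRHS]ger0_norm ?addr_ge0 ?sqr_ge0 // normrM.
have := real_normK (num_real (X x)); have := real_normK (num_real (Y x)).
have := sqr_ge0 (`|X x| - `|Y x|); have := normr_ge0 (X x); have := normr_ge0 (Y x).
nra.
Qed.

Lemma integral_affine_prod a b c a' b' c' :
  (\int[P]_x (((a * X x + b * Y x + c) * (a' * X x + b' * Y x + c'))%R)%:E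
   = (E P a b c a' b' c')%:E)%E.
Proof.
have [i1 e1] := integrableDZ_Rintegral (a * c' + a' * c) (icst (c * c')) iX.
have [i2 e2] := integrableDZ_Rintegral (b * c' + b' * c) i1 iY.
have [i3 e3] := integrableDZ_Rintegral (a * a') i2 integrable_X2.
have [i4 e4] := integrableDZ_Rintegral (b * b') i3 integrable_Y2.
have [i5 e5] := integrableDZ_Rintegral (a * b' + a' * b) i4 iXY.
have expand x : (a * X x + b * Y x + c) * (a' * X x + b' * Y x + c')
  = cst (c * c') x + (a * c' + a' * c) * X x + (b * c' + b' * c) * Y x
    + a * a' * X x ^+ 2 + b * b' * Y x ^+ 2 + (a * b' + a' * b) * (X x * Y x).
  by rewrite /=; ring.
under eq_integral => x _ do rewrite expand.
rewrite -[LHS]fineK; last by apply: integrable_fin_num.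
congr EFin; rewrite [LHS]e5 e4 e3 e2 e1 Rintegral_cst // (congr1 fine (probability_setT P)).
by rewrite /Eprod /mx /my /mxx /myy /mxy /=; ring.
Qed.

End OneMeasure.

Lemma moment_family_PP : @moment_family R _ mx my mxx myy mxy PP.
Proof.
split=> [//|P a b c PPP|].
  rewrite -lee_fin -integral_affine_prod //.
  by apply: integral_ge0 => x _; rewrite lee_fin -expr2 sqr_ge0.
have fin_sum :
    (sublin_exp PP (fun w => (X w ^+ 2)%R) + sublin_exp PP (fun w => (Y w ^+ 2)%R))%E
    \is a fin_num by rewrite ge0_fin_numE ?adde_ge0 ?sublin_exp_sqr_ge0.
exists (fine (sublin_exp PP (fun w => (X w ^+ 2)%R) + sublin_exp PP (fun w => (Y w ^+ 2)%R)))
  => P PPP; split; apply: fine_le => //.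
- by apply: (integrable_fin_num measurableT); exact: integrable_X2.
- by apply: le_trans (sublin_exp_ge _ PPP) _; rewrite leeDl // sublin_exp_sqr_ge0.
- by apply: (integrable_fin_num measurableT); exact: integrable_Y2.
- by apply: le_trans (sublin_exp_ge _ PPP) _; rewrite leeDr // sublin_exp_sqr_ge0.
Qed.

Let HM := moment_family_PP.

Lemma sublin_exp_affine_prod f a b c a' b' c' :
  (forall w, f w = (a * X w + b * Y w + c) * (a' * X w + b' * Y w + c')) ->
  sublin_exp PP f = (supI PP (fun P => E P a b c a' b' c'))%:E.
Proof.
move=> fE; rewrite /sublin_exp (eq_imagel (f' := fun P => (E P a b c a' b' c')%:E)).
  exact: ereal_sup_EFin_img PP0 (Eprod_bounded_on HM a b c a' b' c').
by move=> P PPP; rewrite -integral_affine_prod //; apply: eq_integral => w _; rewrite fE.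
Qed.

Lemma oppe_sublin_exp_opp f a b c a' b' c' :
  (forall w, f w = (a * X w + b * Y w + c) * (a' * X w + b' * Y w + c')) ->
  (- sublin_exp PP (fun w => (- f w)%R))%E = (infI PP (fun P => E P a b c a' b' c'))%:E.
Proof.
move=> fE; rewrite (sublin_exp_affine_prod _ (- a) (- b) (- c) a' b' c'); last first.
  by move=> w; rewrite fE; ring.
rewrite infIE EFinN; congr (- (supI _ _)%:E)%E.
by apply/funext => P; rewrite /Eprod; ring.
Qed.

Lemma Mset_lin {W s t} : (forall w, W w = s * X w + t * Y w) -> Mset PP W = mean_int s t.
Proof.
move=> WE; rewrite /Mset /upper_mean /lower_mean -fineN.
rewrite (sublin_exp_affine_prod W s t 0 0 0 1); last by move=> w; rewrite WE; ring.
by rewrite (oppe_sublin_exp_opp W s t 0 0 0 1) // => w; rewrite WE; ring.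
Qed.

Lemma upper_var_lin W s t :
  (forall w, W w = s * X w + t * Y w) -> upper_var PP W = var_up s t.
Proof.
move=> WE; rewrite /upper_var (Mset_lin WE).
rewrite (eq_imagel (f' := fun mu => (supI PP (sqdev s t mu))%:E)); last first.
  by move=> mu _; apply: sublin_exp_affine_prod => w; rewrite WE; ring.
rewrite ereal_inf_EFin_img //; first exact: mean_int_neq0 HM s t.
exact: sup_sqdev_bounded_on HM s t.
Qed.

Lemma lower_var_lin W s t :
  (forall w, W w = s * X w + t * Y w) -> lower_var PP W = var_lo s t.
Proof.
move=> WE; rewrite /lower_var (Mset_lin WE).
rewrite (eq_imagel (f' := fun mu => (infI PP (sqdev s t mu))%:E)); last first.
  by move=> mu _; apply: oppe_sublin_exp_opp => w; rewrite WE; ring.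
rewrite ereal_inf_EFin_img //; first exact: mean_int_neq0 HM s t.
exact: inf_sqdev_bounded_on HM s t.
Qed.

Lemma MsetX : Mset PP X = mean_int 1 0.
Proof. by apply: Mset_lin => w; ring. Qed.

Lemma MsetY : Mset PP Y = mean_int 0 1.
Proof. by apply: Mset_lin => w; ring. Qed.

Lemma upper_covE : upper_cov PP X Y = cov_up.
Proof.
rewrite /upper_cov MsetX MsetY.
rewrite (eq_imagel (f' := fun m2 => (infI (mean_int 1 0) (fun m1 => supI PP (cross m1 m2)))%:E)).
  by rewrite ereal_sup_EFin_img //; [exact: mean_int_neq0 HM 0 1 | exact: cov_up_bounded_on].
move=> m2 M2; rewrite (eq_imagel (f' := fun m1 => (supI PP (cross m1 m2))%:E)).
  rewrite ereal_inf_EFin_img //; first exact: mean_int_neq0 HM 1 0.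
  exact (sup_cross_bounded_on HM M2).
by move=> m1 _; apply: sublin_exp_affine_prod => w; ring.
Qed.

Lemma lower_covE : lower_cov PP X Y = cov_lo.
Proof.
rewrite /lower_cov MsetX MsetY.
rewrite (eq_imagel (f' := fun m2 => (supI (mean_int 1 0) (fun m1 => infI PP (cross m1 m2)))%:E)).
  by rewrite ereal_inf_EFin_img //; [exact: mean_int_neq0 HM 0 1 | exact: cov_lo_bounded_on].
move=> m2 M2; rewrite (eq_imagel (f' := fun m1 => (infI PP (cross m1 m2))%:E)).
  rewrite ereal_sup_EFin_img //; first exact: mean_int_neq0 HM 1 0.
  exact (inf_cross_bounded_on HM M2).
by move=> m1 _; apply: oppe_sublin_exp_opp => w; ring.
Qed.

Lemma upper_var_add_le : upper_var PP (fun w => X w + Y w)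
  <= upper_var PP X + upper_var PP Y + 2 * upper_cov PP X Y.
Proof.
have -> : upper_var PP (fun w => X w + Y w) = var_up 1 1 by apply: upper_var_lin => w; ring.
have -> : upper_var PP X = var_up 1 0 by apply: upper_var_lin => w; ring.
have -> : upper_var PP Y = var_up 0 1 by apply: upper_var_lin => w; ring.
by rewrite upper_covE; exact: var_up_add_le.
Qed.

Lemma lower_var_add_ge : lower_var PP X + lower_var PP Y + 2 * lower_cov PP X Y
  <= lower_var PP (fun w => X w + Y w).
Proof.
have -> : lower_var PP (fun w => X w + Y w) = var_lo 1 1 by apply: lower_var_lin => w; ring.
have -> : lower_var PP X = var_lo 1 0 by apply: lower_var_lin => w; ring.
have -> : lower_var PP Y = var_lo 0 1 by apply: lower_var_lin => w; ring.
by rewrite lower_covE; exact: var_lo_add_ge.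
Qed.

Lemma var_diff_le_lower_cov : lower_var PP (fun w => (X w + Y w) / 2)
  - upper_var PP (fun w => (X w - Y w) / 2) <= lower_cov PP X Y.
Proof.
have -> : lower_var PP (fun w => (X w + Y w) / 2) = var_lo (2^-1) (2^-1).
  by apply: lower_var_lin => w; ring.
have -> : upper_var PP (fun w => (X w - Y w) / 2) = var_up (2^-1) (- 2^-1).
  by apply: upper_var_lin => w; ring.
by rewrite lower_covE; exact: var_diff_le_cov_lo.
Qed.

Lemma lower_cov_le_upper_cov : lower_cov PP X Y <= upper_cov PP X Y.
Proof. by rewrite lower_covE upper_covE; exact: cov_lo_le_cov_up. Qed.

Lemma upper_cov_le_var_diff : upper_cov PP X Y
  <= upper_var PP (fun w => (X w + Y w) / 2) - lower_var PP (fun w => (X w - Y w) / 2).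
Proof.
have -> : upper_var PP (fun w => (X w + Y w) / 2) = var_up (2^-1) (2^-1).
  by apply: upper_var_lin => w; ring.
have -> : lower_var PP (fun w => (X w - Y w) / 2) = var_lo (2^-1) (- 2^-1).
  by apply: lower_var_lin => w; ring.
by rewrite upper_covE; exact: cov_up_le_var_diff.
Qed.

Lemma normr_upper_cov_le :
  `|upper_cov PP X Y| <= Num.sqrt (upper_var PP X * upper_var PP Y).
Proof.
have -> : upper_var PP X = var_up 1 0 by apply: upper_var_lin => w; ring.
have -> : upper_var PP Y = var_up 0 1 by apply: upper_var_lin => w; ring.
by rewrite upper_covE; exact: normr_cov_up_le.
Qed.

End SublinearMoments.

Theorem proposition3p8 (d : measure_display) (T : measurableType d) (R : realType)
  (PP : set (probability T R)) (X Y : T -> R) :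
  PP !=set0 ->
  measurable_fun setT X -> measurable_fun setT Y ->
  (sublin_exp PP (fun w => (X w ^+ 2)%R) + sublin_exp PP (fun w => (Y w ^+ 2)%R) < +oo)%E ->
  [/\ upper_var PP (fun w => X w + Y w)
        <= upper_var PP X + upper_var PP Y + 2 * upper_cov PP X Y,
      lower_var PP (fun w => X w + Y w)
        >= lower_var PP X + lower_var PP Y + 2 * lower_cov PP X Y,
      [/\ lower_var PP (fun w => (X w + Y w) / 2) - upper_var PP (fun w => (X w - Y w) / 2)
            <= lower_cov PP X Y,
          lower_cov PP X Y <= upper_cov PP X Y
        & upper_cov PP X Y
            <= upper_var PP (fun w => (X w + Y w) / 2) - lower_var PP (fun w => (X w - Y w) / 2)]
    & `|upper_cov PP X Y| <= Num.sqrt (upper_var PP X * upper_var PP Y)].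
Proof.
move=> PP0 mX mY fin2.
split; [exact: upper_var_add_le | exact: lower_var_add_ge | split |
        exact: normr_upper_cov_le].
- exact: var_diff_le_lower_cov.
- exact: lower_cov_le_upper_cov.
- exact: upper_cov_le_var_diff.
Qed.
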